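(* The only cell-preserving, decoration-preserving automorphism of the decorated combinatorial tiling $K$ is the identity map.
   Context: $K$ is the decorated combinatorial tiling: a 2-dimensional CW-complex homeomorphic to the open disk, built as follows. A decorated pentagon has boundary vertices $v_1,\dots,v_5$ in cyclic order (indices mod 5) with corner labels $1,\dots,5$, corner $v_i$ labelled $i$. The rule $\omega$ adds a vertex $m_i$ inside each edge $v_iv_{i+1}$, interior vertices $c_1,\dots,c_5$, edges $c_ic_{i+1}$, $c_im_i$, and replaces the face by the central pentagon $c_1\cdots c_5$ (label $i+1$ at $c_i$) and petals $v_i\,m_i\,c_i\,c_{i-1}\,m_{i-1}$ with labels $i,i+1,i+2,i+3,i+4$ (mod 5) at these corners. $K_0$ is one decorated pentagon, $K_n=\omega^n(K_0)$, $K_n$ embeds label-preservingly onto the central superpentagon $\omega^n(\text{central face of }\omega(K_0))$ of $K_{n+1}$, and $K$ is the direct limit. Decoration-preserving means corner labels are preserved. *)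

(* Conventions.
   * A letter [a : option 'I_5] names a subface of omega(P) for a decorated
     pentagon P: [None] is the central pentagon c_1..c_5, [Some i] is the
     petal  v_i m_i c_i c_{i-1} m_{i-1}  (the petal whose corner labelled i
     is the corner v_i of P).
   * A word [a :: w] names the face of omega^(n+1)(P) (n = size w) which is
     the face [w] of omega^n(subface a), the subface carrying its own
     decoration.  Faces of K_n = omega^n(K_0) are the words of length n.
   * The label-preserving embedding K_n -> K_(n+1) onto omega^n(central
     face of omega(K_0)) sends the face w to [None :: w] (corner label j to
     corner label j).  Hence faces of the direct limit K are the words not
     starting with [None] ("reduced" words); the face [w] lives at level
     [size w].
   * Labels of a face are in 'I_5; the corner labelled j of a face is joined
     by an edge to the corner labelled j+1 (cyclic order of the boundary
     equals the cyclic order of labels, as in the rule omega).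
   * Vertices: the position of a corner inside omega^n(P) is described by a
     [loc]:
       Bd i k   : on the side v_i v_(i+1) of P, k steps (k < 2^n) from v_i;
       In a l   : interior vertex of subface a, with position l there;
       Cv i     : the centre vertex c_i of omega(P);
       Ecc i t  : interior point of the (subdivided) edge c_i c_(i+1),
                  t steps from c_i (0 < t < 2^(n-1));
       Ecm i t  : interior point of the (subdivided) edge c_i m_i,
                  t steps from m_i (0 < t < 2^(n-1)).                     *)
From mathcomp Require Import all_boot.

Set Implicit Arguments.
Unset Strict Implicit.
Unset Printing Implicit Defensive.

Definition letter := option 'I_5.

Inductive loc : Type :=
| Bd (i k : nat)
| In (a : letter) (l : loc)
| Cv (i : nat)
| Ecc (i t : nat)
| Ecm (i t : nat).

Definition lpred (i : nat) : nat := (i + 4) %% 5.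

(* [lift N a l]: position in omega^(n+1)(P) of the vertex with position [l]
   in omega^n(subface a), where N = 2^n is the number of edges on each side
   of the subface. *)
Definition lift (N : nat) (a : letter) (l : loc) : loc :=
  match l with
  | Bd i k =>
      match a with
      | None =>
          (* central face: corner labelled j is c_(j-1); side j runs from
             c_(j-1) to c_j *)
          if k == 0 then Cv (lpred i) else Ecc (lpred i) k
      | Some b =>
          (* petal b: corners labelled b..b+4 are v_b m_b c_b c_(b-1) m_(b-1) *)
          match (i + 5 - b) %% 5 with
          | 0 => Bd b k                                          (* v_b -> m_b *)
          | 1 => if k == 0 then Bd b N else Ecm b k              (* m_b -> c_b *)
          | 2 => if k == 0 then Cv b else Ecc (lpred b) (N - k)  (* c_b -> c_(b-1) *)
          | 3 => if k == 0 then Cv (lpred b)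
                 else Ecm (lpred b) (N - k)             (* c_(b-1) -> m_(b-1) *)
          | _ => Bd (lpred b) (N + k)                   (* m_(b-1) -> v_b *)
          end
      end
  | _ => In a l
  end.

Fixpoint loc_of (w : seq letter) (j : 'I_5) : loc :=
  match w with
  | [::] => Bd j 0
  | a :: w' => lift (2 ^ size w') a (loc_of w' j)
  end.

(* Canonical name of a vertex of the direct limit K, given its position [l]
   at level [n] (i.e. in K_n).  Passing from level n to level n+1 replaces
   l by [lift (2^n) None l]; the canonical name is the one at the least
   level at which the vertex is an interior vertex, obtained by pushing
   boundary positions one level up and stripping central [In None] layers. *)
Fixpoint strip (n : nat) (l : loc) : nat * loc :=
  match l with
  | In None l' => strip n.-1 l'
  | _ => (n, l)
  end.

Definition vcanon (n : nat) (l : loc) : nat * loc :=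
  match l with
  | Bd _ _ => (n.+1, lift (2 ^ n) None l)
  | _ => strip n l
  end.

Definition vname (w : seq letter) (j : 'I_5) : nat * loc :=
  vcanon (size w) (loc_of w j).

Definition reduced (w : seq letter) : bool :=
  if w is None :: _ then false else true.

Definition face := {w : seq letter | reduced w}.

Definition vertex := {v : nat * loc | exists (f : face) (j : 'I_5), vname (sval f) j = v}.

Definition corner (f : face) (j : 'I_5) : vertex :=
  exist _ (vname (sval f) j) (ex_intro _ f (ex_intro _ j erefl)).

Definition edge (v w : vertex) : Prop :=
  exists (f : face) (j : 'I_5),
    (corner f j = v /\ corner f (ordS j) = w) \/
    (corner f j = w /\ corner f (ordS j) = v).

(* A cell-preserving, decoration-preserving automorphism of K:
   bijections on vertices and faces, preserving and reflecting edges
   (edges of K are determined by their endpoints), and mapping the corner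
   of f labelled j to the corner of (phiF f) labelled j. *)
Definition dec_automorphism (phiV : vertex -> vertex) (phiF : face -> face) : Prop :=
  [/\ bijective phiV, bijective phiF,
      (forall v w, edge v w <-> edge (phiV v) (phiV w)) &
      (forall f j, corner (phiF f) j = phiV (corner f j))].

(* Corners see the
   difference between children: the corner j of a central child is also the
   corner j+3 of a petal, whereas the corner b+2 of the petal b is the centre
   vertex c_b, around which no face carries the label b.  Hence a map phi on
   faces that preserves coincidences of labelled corners sends the children of
   f to the same-named children of one face, descend phi f, and descend phi is
   again corner-preserving.  Iterating n times, phi (f s) is the face s below
   (descend^n phi) f for every word s of length n.  As root = root None^n, the
   face descend^n phi root must be root once n exceeds the length of phi root;
   writing any f as root None^m f then shows phi f = f. *)

From Pilot Require Import Defs.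
From mathcomp Require Import all_boot zify.
From Stdlib Require Import ProofIrrelevance.

Set Implicit Arguments.
Unset Strict Implicit.
Unset Printing Implicit Defensive.

Definition is_bd (l : loc) : bool := if l is Bd _ _ then true else false.

Lemma lift_eq_In N c x a y : Defs.lift N c x = In a y -> c = a /\ x = y.
Proof.
case: x => [i k|b l|i|i t|i t] /=; [|by case=> -> ->..].
case: c => [b|]; last by case: ifP.
by case: ((i + 5 - b) %% 5) => [|[|[|[|?]]]] //; case: ifP.
Qed.

Lemma lift_nonbd N c x : ~~ is_bd x -> Defs.lift N c x = In c x.
Proof. by case: x. Qed.

(* [lift_word n w x]: position in omega^(size w + n)(P) of the position [x]
   of omega^n(face w of omega^(size w)(P)). *)
Fixpoint lift_word (n : nat) (w : seq letter) (x : loc) : loc :=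
  if w is c :: w' then Defs.lift (2 ^ (size w' + n)) c (lift_word n w' x) else x.

Lemma loc_of_cat w u j : loc_of (w ++ u) j = lift_word (size u) w (loc_of u j).
Proof. by elim: w => //= c w ->; rewrite size_cat. Qed.

Lemma lift_word_nonbd n w l : ~~ is_bd l -> ~~ is_bd (lift_word n w l).
Proof. by elim: w => //= c w IH /IH; case: (lift_word n w l). Qed.

Lemma loc_of_eq_lift_word n u g k l : ~~ is_bd l -> size g = size u + n ->
  loc_of g k = lift_word n u l -> exists2 v, g = u ++ v & loc_of v k = l.
Proof.
move=> l_int; elim: u g => [|c u IH] g /=; first by exists g.
case: g => //= c' g [size_g].
rewrite [RHS]lift_nonbd ?lift_word_nonbd // => /lift_eq_In[-> /IH].
by case=> // v -> loc_v; exists v.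
Qed.

Fixpoint central_depth (l : loc) : nat :=
  if l is In None l' then (central_depth l').+1 else 0.

Fixpoint central_core (l : loc) : loc :=
  if l is In None l' then central_core l' else l.

Lemma iter_central_core l : l = iter (central_depth l) (In None) (central_core l).
Proof. by elim: l => //= -[a|] l //= {1}->. Qed.

Lemma strip_eq n l : central_depth l <= n ->
  strip n l = (n - central_depth l, central_core l).
Proof.
elim: l n => [i k|[a|] l IH|i|i t|i t] n //=; rewrite ?subn0 //.
by case: n => //= n le_dn; rewrite IH.
Qed.

Lemma central_depth_lift N c x :
  central_depth (Defs.lift N c x) <= (central_depth x).+1.
Proof.
case: x => [i k|b l|i|i t|i t] /=; try by case: c.
case: c => [b|]; last by case: ifP.
by case: ((i + 5 - b) %% 5) => [|[|[|[|?]]]] //; case: ifP.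
Qed.

Lemma central_depth_loc_of w j : central_depth (loc_of w j) <= size w.
Proof. by elim: w => //= c w IH; apply: leq_trans (central_depth_lift _ _ _) _. Qed.

Lemma lift_word_nseq_None n d w l : ~~ is_bd l ->
  lift_word n (nseq d None ++ w) l = iter d (In None) (lift_word n w l).
Proof.
move=> l_int; elim: d => //= d ->; rewrite lift_nonbd //.
by case: d => //=; apply: lift_word_nonbd.
Qed.

Lemma vcanon_nonbd n l : ~~ is_bd l -> vcanon n l = strip n l.
Proof. by case: l. Qed.

Lemma strip_depth0 n l : central_depth l = 0 -> strip n l = (n, l).
Proof. by case: l => // -[]. Qed.

(* The word of the face [a] of omega(w); the central face of omega(root) is
   identified with the root face itself. *)
Definition childw (w : seq letter) (a : letter) : seq letter :=
  if (w == [::]) && (a == None) then [::] else rcons w a.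

Lemma childw_rcons w b : reduced (rcons w b) -> childw w b = rcons w b.
Proof. by rewrite /childw; case: w; case: b. Qed.

Lemma vname_childw w a j :
  vname (childw w a) j = vcanon (size w).+1 (lift_word 1 w (loc_of [:: a] j)).
Proof.
rewrite /childw; case: ifP => [/andP[/eqP-> /eqP->] // | _].
by rewrite /vname -cats1 loc_of_cat size_cat addn1.
Qed.

Lemma central_depth_lift_word_Cv w i :
  reduced w -> central_depth (lift_word 1 w (Cv i)) = 0.
Proof. by case: w => [|[c|] w] //= _; rewrite lift_nonbd // lift_word_nonbd. Qed.

Lemma vname_childw_Cv w a j i : reduced w -> loc_of [:: a] j = Cv i ->
  vname (childw w a) j = ((size w).+1, lift_word 1 w (Cv i)).
Proof.
move=> w_red a_j; rewrite vname_childw a_j vcanon_nonbd ?lift_word_nonbd //.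
by rewrite strip_depth0 // central_depth_lift_word_Cv.
Qed.

Lemma vname_bd_eq_Cv g k w i : is_bd (loc_of g k) ->
  vname g k = ((size w).+1, lift_word 1 w (Cv i)) -> g = [::] /\ w = [::].
Proof.
rewrite /vname; case: (loc_of g k) => // i0 p _ /= [size_g].
case: w size_g => [|c w] /=; last by case: ifP; rewrite lift_nonbd ?lift_word_nonbd.
by move/size0nil.
Qed.

Lemma vname_interior_eq_Cv g k w i : ~~ is_bd (loc_of g k) ->
  vname g k = ((size w).+1, lift_word 1 w (Cv i)) ->
  exists2 b, g = nseq (central_depth (loc_of g k)) None ++ rcons w b
           & loc_of [:: b] k = Cv i.
Proof.
move=> g_int; rewrite /vname vcanon_nonbd // strip_eq ?central_depth_loc_of //.
case=> size_g core_g; have := iter_central_core (loc_of g k).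
rewrite core_g -lift_word_nseq_None // => /loc_of_eq_lift_word[] //.
  by rewrite size_cat size_nseq; move: (central_depth_loc_of g k); lia.
set d := central_depth _ in size_g *; move=> v g_v v_k.
have := congr1 size g_v; rewrite !size_cat size_nseq.
case: v g_v v_k => [|b [|? ?]] g_v v_k /=; try by move: size_g; lia.
by exists b; rewrite // {1}g_v -catA cats1.
Qed.

(* A centre vertex c_i of omega(face w) lies only on faces of omega(face w). *)
Lemma vname_eq_childw_Cv w a j g k i : reduced w -> reduced g ->
  loc_of [:: a] j = Cv i -> vname g k = vname (childw w a) j ->
  exists2 b, g = childw w b & loc_of [:: b] k = Cv i.
Proof.
move=> w_red g_red a_j; rewrite (vname_childw_Cv w_red a_j) => g_k.
case g_bd: (is_bd (loc_of g k)).
  have [g0 w0] := vname_bd_eq_Cv g_bd g_k; subst g w.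
  by exists None => //; move: g_k => /= -[<-].
have [b g_b b_k] := vname_interior_eq_Cv (negbT g_bd) g_k.
exists b => //; move: g_red; rewrite {}g_b.
by case: (central_depth _) => // g_red; rewrite childw_rcons.
Qed.

(* Change of level n -> n+1 for positions not created by the refinement:
   every side gets twice as many edges. *)
Fixpoint dilate (l : loc) : loc :=
  match l with
  | Bd i k => Bd i k.*2
  | In a l => In a (dilate l)
  | Cv i => Cv i
  | Ecc i t => Ecc i t.*2
  | Ecm i t => Ecm i t.*2
  end.

Definition vdilate (v : nat * loc) : nat * loc := (v.1.+1, dilate v.2).

Lemma dilate_inj : injective dilate.
Proof.
elim=> [i k|a l IH|i|i t|i t] [i' k'|a' l'|i'|i' t'|i' t'] //=;
  first [by case=> -> /double_inj -> | by case=> -> /IH -> | by case=> ->].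
Qed.

Lemma vdilate_inj : injective vdilate.
Proof. by case=> [n l] [n' l'] [-> /dilate_inj ->]. Qed.

Lemma dilate_lift N c l : dilate (Defs.lift N c l) = Defs.lift N.*2 c (dilate l).
Proof.
case: l => [i k|a l|i|i t|i t] //=.
case: c => [b|] /=; last by rewrite double_eq0; case: ifP.
case: ((i + 5 - b) %% 5) => [|[|[|[|?]]]] //=; rewrite ?double_eq0;
  try case: ifP => //= _; by rewrite ?doubleB ?doubleD.
Qed.

Lemma loc_of_rcons_petal w j : loc_of (rcons w (Some j)) j = dilate (loc_of w j).
Proof.
elim: w => [|c w IH] /=; first by rewrite addKn modnn.
by rewrite IH dilate_lift size_rcons expnS mul2n.
Qed.

Lemma central_depth_dilate l : central_depth (dilate l) = central_depth l.
Proof. by elim: l => //= -[a|] l //= ->. Qed.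

Lemma central_core_dilate l : central_core (dilate l) = dilate (central_core l).
Proof. by elim: l => //= -[]. Qed.

Lemma vcanon_dilate n l : central_depth l <= n ->
  vcanon n.+1 (dilate l) = vdilate (vcanon n l).
Proof.
case: l => [i k|a l|i|i t|i t] le_dn.
  by rewrite /vcanon /vdilate /= double_eq0; case: ifP.
all: rewrite !vcanon_nonbd // !strip_eq ?central_depth_dilate ?(leqW le_dn) //.
all: by rewrite central_core_dilate /vdilate subSn.
Qed.

Lemma vname_rcons_petal w j : vname (rcons w (Some j)) j = vdilate (vname w j).
Proof.
by rewrite /vname size_rcons loc_of_rcons_petal vcanon_dilate ?central_depth_loc_of.
Qed.

Definition label_add (j : 'I_5) (d : nat) : 'I_5 :=
  Ordinal (ltn_pmod (j + d) (isT : 0 < 5)).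

Lemma label_add_2_3 b : label_add (label_add b 2) 3 = b.
Proof. by apply: val_inj; rewrite /= modnDml -addnA modnDr modn_small. Qed.

Lemma loc_of_central_corner (j : 'I_5) : loc_of [:: None] j = Cv (lpred j).
Proof. by []. Qed.

Lemma loc_of_petal_corner3 (j : 'I_5) :
  loc_of [:: Some j] (label_add j 3) = Cv (lpred j).
Proof. by case: j => -[|[|[|[|[|?]]]]]. Qed.

Lemma loc_of_petal_corner2 (b : 'I_5) : loc_of [:: Some b] (label_add b 2) = Cv b.
Proof. by case: b => -[|[|[|[|[|?]]]]]. Qed.

Lemma loc_of_corner_neq_Cv a (b : 'I_5) : loc_of [:: a] b <> Cv b.
Proof.
by case: a => [a|]; case: b => -[|[|[|[|[|?]]]]] //; case: a => -[|[|[|[|[|?]]]]].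
Qed.

Lemma loc_of_corner3_eq_Cv a (b : 'I_5) :
  loc_of [:: a] (label_add b 3) = Cv (lpred b) -> a = Some b.
Proof.
case: a => [a|]; case: b => -[|[|[|[|[|?]]]]] //= ?;
  try case: a => -[|[|[|[|[|?]]]]] //= ?.
all: by move=> _; congr Some; apply: val_inj.
Qed.

Lemma reduced_childw w a : reduced w -> reduced (childw w a).
Proof. by rewrite /childw; case: w => [|[b|] w] //=; case: a. Qed.

Definition child (f : face) (a : letter) : face :=
  exist (fun w => reduced w) (childw (sval f) a) (reduced_childw a (proj2_sig f)).

Lemma val_child_petal (f : face) b :
  sval (child f (Some b)) = rcons (sval f) (Some b).
Proof. by rewrite /= /childw andbF. Qed.

Lemma reduced_parent w : reduced w -> reduced (take (size w).-1 w).
Proof. by case: w => [|[b|] [|c w]]. Qed.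

Definition parent (f : face) : face :=
  exist (fun w => reduced w) (take (size (sval f)).-1 (sval f))
    (reduced_parent (proj2_sig f)).

Lemma child_parent f : f = child (parent f) (last None (sval f)).
Proof.
apply: val_inj; case: f => w /=; case/lastP: w => [|w a] // w_red.
rewrite size_rcons -cats1 take_size_cat // cats1 last_rcons.
by rewrite childw_rcons.
Qed.

Definition root : face := exist (fun w => reduced w) [::] isT.

Definition childs (f : face) (s : seq letter) : face := foldl child f s.

Lemma val_childs (f : face) s : sval f != [::] -> sval (childs f s) = sval f ++ s.
Proof.
elim: s f => [|a s IH] f f_nil /=; first by rewrite cats0.
have val_fa : sval (child f a) = rcons (sval f) a.
  by rewrite /= /childw (negbTE f_nil).
by rewrite IH val_fa ?cat_rcons // -size_eq0 size_rcons.
Qed.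

Lemma childs_root_None m : childs root (nseq m None) = root.
Proof. by elim: m => //= m; have -> : child root None = root by apply: val_inj. Qed.

Lemma childs_root_nseq_cat m (f : face) : childs root (nseq m None ++ sval f) = f.
Proof.
rewrite /childs foldl_cat -/(childs root (nseq m None)) childs_root_None.
apply: val_inj.
by case: f => [[|[b|] t] f_red] //=; rewrite val_childs.
Qed.

Definition corner_preserving (phi : face -> face) : Prop :=
  forall f j g k, vname (sval f) j = vname (sval g) k ->
    vname (sval (phi f)) j = vname (sval (phi g)) k.

Lemma vname_child_eq (f : face) a b j k : loc_of [:: a] j = loc_of [:: b] k ->
  vname (sval (child f a)) j = vname (sval (child f b)) k.
Proof. by move=> a_j_b_k; rewrite !vname_childw a_j_b_k. Qed.

Lemma vname_eq_child_Cv (f g : face) a j k i : loc_of [:: a] j = Cv i ->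
  vname (sval g) k = vname (sval (child f a)) j ->
  exists2 b, g = child f b & loc_of [:: b] k = Cv i.
Proof.
move=> a_j /(vname_eq_childw_Cv (proj2_sig f) (proj2_sig g) a_j)[b g_b b_k].
by exists b => //; apply: val_inj.
Qed.

(* Central children have this property; the petal [Some b] fails it at its
   corner b+2, the centre vertex c_b. *)
Definition central_type (f : face) : Prop :=
  forall j, exists g : face, vname (sval f) j = vname (sval g) (label_add j 3).

Lemma central_type_child_central f : central_type (child f None).
Proof.
move=> j; exists (child f (Some j)); apply: vname_child_eq.
by rewrite loc_of_central_corner loc_of_petal_corner3.
Qed.

Lemma not_central_type_child_petal f b : ~ central_type (child f (Some b)).
Proof.
move=> /(_ (label_add b 2))[g /esym /(vname_eq_child_Cv (loc_of_petal_corner2 b))].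
by rewrite label_add_2_3 => -[b' _ /loc_of_corner_neq_Cv].
Qed.

Lemma corner_preserving_central_type phi f :
  corner_preserving phi -> central_type f -> central_type (phi f).
Proof. by move=> phi_cp f_c j; have [g /phi_cp f_g] := f_c j; exists (phi g). Qed.

Definition descend (phi : face -> face) (f : face) : face :=
  parent (phi (child f None)).

Section CornerPreserving.

Variable phi : face -> face.
Hypothesis phi_cp : corner_preserving phi.

Lemma descend_child_central f : phi (child f None) = child (descend phi f) None.
Proof.
rewrite /descend; set X := phi _.
have X_c : central_type X.
  by apply/corner_preserving_central_type/central_type_child_central.
have X_parent := child_parent X.
case: (last None (sval X)) X_parent => [b|] // X_petal.
by rewrite X_petal in X_c; case: (not_central_type_child_petal X_c).
Qed.

Lemma descend_child_petal f b :
  phi (child f (Some b)) = child (descend phi f) (Some b).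
Proof.
have shared : vname (sval (child f None)) b
            = vname (sval (child f (Some b))) (label_add b 3).
  by apply: vname_child_eq; rewrite loc_of_central_corner loc_of_petal_corner3.
move: (phi_cp shared); rewrite descend_child_central => /esym.
case/(vname_eq_child_Cv (loc_of_central_corner b)) => b' -> /loc_of_corner3_eq_Cv.
by move=> ->.
Qed.

Lemma descend_child f a : phi (child f a) = child (descend phi f) a.
Proof.
by case: a => [b|]; [apply: descend_child_petal | apply: descend_child_central].
Qed.

Lemma corner_preserving_descend : corner_preserving (descend phi).
Proof.
move=> f j g k f_j_g_k.
have : vname (sval (child f (Some j))) j = vname (sval (child g (Some k))) k.
  by rewrite !val_child_petal !vname_rcons_petal f_j_g_k.
move/phi_cp; rewrite !descend_child_petal !val_child_petal !vname_rcons_petal.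
exact: vdilate_inj.
Qed.

End CornerPreserving.

Section Iterate.

Variable phi : face -> face.
Hypothesis phi_cp : corner_preserving phi.

Lemma corner_preserving_iter_descend n : corner_preserving (iter n descend phi).
Proof. by elim: n => //= n; apply: corner_preserving_descend. Qed.

Lemma map_childs_iter_descend f s :
  phi (childs f s) = childs (iter (size s) descend phi f) s.
Proof.
elim: s f => //= a s IH f; rewrite IH.
by rewrite (descend_child (corner_preserving_iter_descend _)).
Qed.

Lemma corner_preserving_id f : phi f = f.
Proof.
set n := size (sval (phi root)) + size (sval f); set psi := iter n descend phi.
have psi_root : psi root = root.
  have := map_childs_iter_descend root (nseq n None).
  rewrite childs_root_None size_nseq -/psi.
  move=> phi_root; apply: val_inj; case psi_val: (sval (psi root)) => [|c t] //.
  move: phi_root => /(congr1 (size \o sval)) /=.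
  by rewrite val_childs ?psi_val // size_cat size_nseq /n /= => ?; exfalso; lia.
have := childs_root_nseq_cat (n - size (sval f)) f; set s := _ ++ _ => f_eq.
rewrite -f_eq map_childs_iter_descend.
have -> : size s = n by rewrite size_cat size_nseq subnK // leq_addl.
by rewrite -/psi psi_root.
Qed.

End Iterate.

Lemma corner_eq (f g : face) j k :
  corner f j = corner g k <-> vname (sval f) j = vname (sval g) k.
Proof. by split=> [/(congr1 sval) | fg]; last exact: subset_eq_compat. Qed.

Lemma vertex_corner (v : vertex) : exists f j, corner f j = v.
Proof.
case: v => v [f [j f_j]]; exists f, j; subst v.
exact: subset_eq_compat.
Qed.

Theorem mainTheorem5 (phiV : vertex -> vertex) (phiF : face -> face) :
  dec_automorphism phiV phiF ->
  (forall v, phiV v = v) /\ (forall f, phiF f = f).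
Proof.
case=> _ _ _ phi_corner.
have phiF_cp : corner_preserving phiF.
  by move=> f j g k /corner_eq f_g; apply/corner_eq; rewrite !phi_corner f_g.
have phiF_id := corner_preserving_id phiF_cp.
split=> // v; have [f [j <-]] := vertex_corner v.
by rewrite -phi_corner phiF_id.
Qed.
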